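(* If $G$ is a finite nonabelian group, then $Z_{K(G)}=\bigcap_{\psi\in\mathcal{X}}Z(\psi)$.
   Context: For $\chi\in\mathrm{Irr}(G)$, the center of $\chi$ is $Z(\chi)=\{g\in G : |\chi(g)|=\chi(1)\}$. Let $\mathcal{X}=\{\chi\in\mathrm{Irr}(G) : Z(\chi)>Z(G)\}$ (strict containment) and $K(G)=\bigcap_{\chi\in\mathcal{X}}\ker(\chi)$. For a normal subgroup $N$ of $G$, $Z_N$ is defined by $Z_N/N=Z(G/N)$. *)

From mathcomp Require Import all_boot all_order all_algebra all_fingroup all_solvable all_field all_character.
Set Implicit Arguments. Unset Strict Implicit. Unset Printing Implicit Defensive.
Import GRing.Theory Num.Theory.
Local Open Scope ring_scope.

Definition chi_center (gT : finGroupType) (G : {group gT}) (chi : 'CF(G)) : {set gT} :=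
  [set g in G | `|chi g| == chi 1%g].

Definition calX (gT : finGroupType) (G : {group gT}) : {set Iirr G} :=
  [set i : Iirr G | ('Z(G) \proper chi_center 'chi_i)%g].

(* K(G) = intersection of the kernels of chi in X (equal to G if X is empty). *)
Definition KG (gT : finGroupType) (G : {group gT}) : {set gT} :=
  (G :&: \bigcap_(i in calX G) cfker 'chi[G]_i)%g.

(* Z_N, defined by Z_N / N = Z(G / N): the full preimage of Z(G/N). *)
Definition ZN (gT : finGroupType) (G : {group gT}) (N : {set gT}) : {set gT} :=
  (coset N @*^-1 'Z(G / N))%g.

From mathcomp Require Import all_boot all_order all_algebra all_fingroup all_solvable all_field all_character.
Set Implicit Arguments. Unset Strict Implicit. Unset Printing Implicit Defensive.
Import GRing.Theory Num.Theory.
Local Open Scope ring_scope.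

(* For a normal subgroup N, g lies in Z_N exactly when [<g>, G] <= N, and
   Z(chi) = Z_{ker chi} for irreducible chi.  As the commutator condition holds
   for an intersection of normal subgroups iff it holds for each of them,
   Z_{K(G)} is the intersection of the Z_{ker chi} = Z(chi), chi in X. *)

Section CenterModulo.

Variables (gT : finGroupType) (G : {group gT}).

Lemma coset_center_quotient (N : {group gT}) g :
  (N <| G)%g -> g \in G ->
  (coset N g \in 'Z(G / N))%g = ([~: <[g]>, G] \subset N)%g.
Proof.
move=> nsNG Gg; have nNG := normal_norm nsNG.
have nNg : g \in 'N(N)%g by apply: (subsetP nNG).
rewrite /center inE mem_quotient //= -cycle_subG -quotient_cycle //.
by rewrite quotient_cents2 // cycle_subG.
Qed.

Lemma ZN_commg (N : {group gT}) :
  (N <| G)%g -> ZN G N = [set g in G | [~: <[g]>, G] \subset N]%g.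
Proof.
move=> nsNG; apply/setP => g; rewrite [in RHS]inE.
have [Gg | notGg] := boolP (g \in G).
  have nNg : g \in 'N(N)%g by rewrite (subsetP (normal_norm nsNG)).
  rewrite /= -coset_center_quotient //.
  by apply/morphpreP/idP => [[] | ].
rewrite /=; apply/negbTE; apply: contra notGg => ZNg.
by rewrite -(quotientGK nsNG) (subsetP (morphpreS _ (center_sub _))).
Qed.

Lemma ZN_bigcap (I : finType) (P : pred I) (N : I -> {group gT}) :
  (forall i, P i -> N i <| G)%g ->
  ZN G (G :&: \bigcap_(i | P i) N i)%g = (G :&: \bigcap_(i | P i) ZN G (N i))%g.
Proof.
move=> nsNG.
have nsKG : (G :&: \bigcap_(i | P i) N i <| G)%g.
  rewrite /normal subsetIl normsI ?normG //.
  by apply/norms_bigcap/bigcapsP => i /nsNG/normal_norm.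
apply/setP => g; rewrite ZN_commg // !inE.
have [Gg | //] := boolP (g \in G).
rewrite /= subsetI commg_subr cycle_subG (subsetP (normG G)) //=.
apply/bigcapsP/bigcapP => [sgN i Pi | ZNg i Pi].
  by rewrite ZN_commg ?nsNG // inE Gg sgN.
by have := ZNg i Pi; rewrite ZN_commg ?nsNG // inE => /andP[].
Qed.

Lemma chi_center_irrE (i : Iirr G) : chi_center 'chi_i = ZN G (cfker 'chi_i).
Proof.
have -> : chi_center 'chi_i = 'Z('chi_i)%CF by rewrite /cfcenter irr_char.
by rewrite /ZN -cfcenter_eq_center quotientGK ?cfker_center_normal.
Qed.

End CenterModulo.

Theorem lemma3p9 (gT : finGroupType) (G : {group gT}) :
  ~~ abelian G ->
  ZN G (KG G) = (G :&: \bigcap_(i in calX G) chi_center 'chi[G]_i)%g.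
Proof.
move=> _; rewrite /KG ZN_bigcap => [|i _]; last exact: cfker_normal.
by congr (_ :&: _); apply: eq_bigr => i _; rewrite chi_center_irrE.
Qed.
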